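(* Let $\mathbf{k}$ be an algebraically closed field, $G=\mathrm{GL}_n$, $(\rho,M)$ a finite-dimensional rational representation, $\underline{G}=G\ltimes_\rho M$, $\underline{\mathcal{N}}=\mathcal{N}\times M$. For a partition $\lambda$ of $n$ let $J=J_\lambda$ be the Jordan standard nilpotent matrix of type $\lambda$, $G_J$ its centralizer in $G$, and $J M=\mathsf{d}\rho(J)(M)$, a $G_J$-submodule of $M$. Then: (1) for any $w\in M$, every element of $\{J\}\times(w+JM)$ lies in the $\underline{G}$-orbit of $(J,w)$; (2) $\underline{\mathcal{N}}$ has finitely many $\underline{G}$-orbits if and only if for every partition $\lambda$ of $n$, $G_{J_\lambda}$ has finitely many orbits on $M/J_\lambda M$.
   Context: $\underline{G}$ is $G\times M$ with product $(g_1,v_1)(g_2,v_2)=(g_1g_2,\rho(g_1)v_2+v_1)$, acting on $\mathfrak{gl}_n\times M$ by $\mathrm{Ad}(g,v)(X,w)=(\mathrm{Ad}(g)X,-\mathsf{d}\rho(\mathrm{Ad}(g)X)v+\rho(g)w)$. $\mathcal{N}$ is the nilpotent cone of $\mathfrak{gl}_n$. $J_\lambda$ is block diagonal with blocks $J_{\lambda_i}$ having $1$ on the superdiagonal and $0$ elsewhere. *)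

From HB Require Import structures.
From mathcomp Require Import all_boot all_order all_algebra all_field.
From mathcomp Require Import mpoly.
Set Implicit Arguments. Unset Strict Implicit. Unset Printing Implicit Defensive.
Import Order.TTheory GRing.Theory Num.Theory.
Local Open Scope ring_scope.

Definition mxcoord (k : fieldType) (n : nat) (g : 'M[k]_n) : 'I_(n * n) -> k :=
  fun i => mxvec g 0 i.

(* A rational representation of GL_n on M = k^m is presented by a matrix
   P of polynomials in the n*n matrix entries and an exponent e:
      rho g = det(g)^(-e) * P(g).
   (Every regular function on GL_n has this form.) *)
Definition repr_mx (k : fieldType) (n m e : nat)
    (P : 'M[{mpoly k[n * n]}]_m) (g : 'M[k]_n) : 'M[k]_m :=
  ((\det g) ^- e) *: map_mx (fun p => p.@[mxcoord g]) P.

Definition is_rational_repr (k : fieldType) (n m e : nat)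
    (P : 'M[{mpoly k[n * n]}]_m) : Prop :=
  repr_mx e P 1%:M = 1%:M /\
  forall g h : 'M[k]_n, g \in unitmx -> h \in unitmx ->
    repr_mx e P (g *m h) = repr_mx e P g *m repr_mx e P h.

(* The differential d rho at the identity, applied to X in gl_n:
   d(P / det^e)_1 (X) = dP_1(X) - e * P(1) * tr X. *)
Definition drepr_mx (k : fieldType) (n m e : nat)
    (P : 'M[{mpoly k[n * n]}]_m) (X : 'M[k]_n) : 'M[k]_m :=
  \matrix_(a, b)
    ((\sum_(i < n * n) ((P a b)^`M(i)).@[mxcoord 1%:M] * mxcoord X i)
     - e%:R * (P a b).@[mxcoord 1%:M] * \tr X).

(* Action of the semidirect product G_ = GL_n |x M on gl_n x M:
   Ad(g,v)(X,w) = (g X g^-1, - d rho(g X g^-1) v + rho(g) w). *)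
Definition Ad_semi (k : fieldType) (n m e : nat) (P : 'M[{mpoly k[n * n]}]_m)
    (g : 'M[k]_n) (v : 'cV[k]_m) (Xw : 'M[k]_n * 'cV[k]_m) :
    'M[k]_n * 'cV[k]_m :=
  let X' := g *m Xw.1 *m invmx g in
  (X', - (drepr_mx e P X' *m v) + repr_mx e P g *m Xw.2).

Definition in_semi_orbit (k : fieldType) (n m e : nat)
    (P : 'M[{mpoly k[n * n]}]_m) (Xw Xw' : 'M[k]_n * 'cV[k]_m) : Prop :=
  exists g : 'M[k]_n, exists v : 'cV[k]_m,
    g \in unitmx /\ Ad_semi e P g v Xw = Xw'.

Definition nilpotent_mx (k : fieldType) (n : nat) (X : 'M[k]_n) : Prop :=
  exists r : nat, X ^+ r = 0.

Definition semi_nilcone_finite_orbits (k : fieldType) (n m e : nat)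
    (P : 'M[{mpoly k[n * n]}]_m) : Prop :=
  exists reps : seq ('M[k]_n * 'cV[k]_m),
    (forall x, x \in reps -> nilpotent_mx x.1) /\
    forall (X : 'M[k]_n) (w : 'cV[k]_m), nilpotent_mx X ->
      exists2 x, x \in reps & in_semi_orbit e P x (X, w).

Definition is_partition (n : nat) (la : seq nat) : Prop :=
  [/\ all (fun p => 0 < p)%N la, sorted geq la & sumn la = n].

Definition block_ends (la : seq nat) : seq nat :=
  [seq sumn (take r la) | r <- iota 1 (size la)].

(* J_la: block diagonal, block i = Jordan block J_{la_i} (1 on the
   superdiagonal, 0 elsewhere).  Entry (i, i+1) is 1 iff i and i+1 lie in
   the same block, i.e. i+1 is not a block end. *)
Definition jordan_nil (k : fieldType) (n : nat) (la : seq nat) : 'M[k]_n :=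
  \matrix_(i, j) (if ((j : nat) == i.+1) && (i.+1 \notin block_ends la)
                  then 1 else 0).

Definition in_image_drepr (k : fieldType) (n m e : nat)
    (P : 'M[{mpoly k[n * n]}]_m) (J : 'M[k]_n) (u : 'cV[k]_m) : Prop :=
  exists y : 'cV[k]_m, u = drepr_mx e P J *m y.

Definition in_centralizer (k : fieldType) (n : nat) (J g : 'M[k]_n) : Prop :=
  g \in unitmx /\ g *m J = J *m g.

(* G_J has finitely many orbits on M / J M: finitely many classes
   w_0 + J M such that every class is G_J-translate of one of them. *)
Definition quot_finite_orbits (k : fieldType) (n m e : nat)
    (P : 'M[{mpoly k[n * n]}]_m) (J : 'M[k]_n) : Prop :=
  exists reps : seq 'cV[k]_m,
    forall w : 'cV[k]_m, exists2 w0, w0 \in reps &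
      exists g : 'M[k]_n, in_centralizer J g /\
        in_image_drepr e P J (repr_mx e P g *m w - w0).

From mathcomp Require Import all_boot all_algebra.
From mathcomp Require Import mpoly.
From mathcomp Require Import zify ring.
From Stdlib Require Import Classical.
Set Implicit Arguments. Unset Strict Implicit. Unset Printing Implicit Defensive.
Import GRing.Theory.
Local Open Scope ring_scope.

(* Nilpotent matrices have Jordan forms: for an X-stable space W, Jordan chains
   of W X are lifted through X, and their bottoms, which are independent in
   W :&: ker X, are completed by new chains of length 1; the count comes from
   rank W = rank (W X) + rank (W :&: ker X).

   The orbit relation of the semidirect product is an equivalence because
   Ad(g1,v1) o Ad(g2,v2) = Ad(g1 g2, rho(g1) v2 + v1), which rests on the
   equivariance d rho(g X g^-1) rho(g) = rho(g) d rho(X).  The latter is the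
   coefficient of t in the polynomial identity
   P(g (1 + tX) g^-1) rho(g) = rho(g) P(1 + tX), valid off the finitely many t
   where 1 + tX is singular.  Two points (J, w), (J, w') lie in one orbit iff
   w' is in rho(c) w + J M for some c centralizing J, which gives part (1) and
   identifies orbits over J with G_J-orbits on M / J M; as every nilpotent
   matrix is conjugate to some J_la and there are finitely many partitions,
   part (2) follows. *)

Lemma sumn_pred (s : seq nat) : all (fun l => 0 < l)%N s ->
  (sumn [seq l.-1 | l <- s] + size s)%N = sumn s.
Proof. by elim: s => //= l s IH /andP[l0 /IH]; lia. Qed.

Lemma sorted_geq_succ_ones (l : seq nat) r :
  sorted geq l -> sorted geq (map succn l ++ nseq r 1%N).
Proof.
have geq_trans : transitive geq by move=> a b c /= h1 h2; apply: leq_trans h2 h1.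
elim: l => [_|x l IH]; first by elim: r => // -[|r].
rewrite /= !(path_sortedE geq_trans) all_cat all_map all_nseq orbT andbT.
by case/andP=> hx /IH ->; rewrite andbT; apply: sub_all hx.
Qed.

Lemma sumn_succ (s : seq nat) : sumn (map succn s) = (sumn s + size s)%N.
Proof. by elim: s => //= l s ->; rewrite addSn addnS addnA. Qed.

Lemma block_ends_cons l la :
  block_ends (l :: la) = l :: map (addn l) (block_ends la).
Proof.
rewrite /block_ends /= take0 addn0 -(addn1 1) iotaDl -!map_comp.
by congr (_ :: _); apply: eq_map => r.
Qed.

Lemma block_ends_gt0 la : all (fun l => 0 < l)%N la ->
  {in block_ends la, forall x, 0 < x}%N.
Proof.
case: la => [|l la] //= /andP[l0 _] x; rewrite block_ends_cons inE.
by case/orP => [/eqP -> //|/mapP[y _ ->]]; rewrite (leq_trans l0) ?leq_addr.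
Qed.

Section JordanChains.
Variables (K : fieldType) (n : nat) (X : 'M[K]_n).

Definition rowspan (L : seq 'rV[K]_n) : 'M[K]_n := (\sum_(v <- L) <<v>>)%MS.

Lemma rowspan_sub m (L : seq 'rV[K]_n) (B : 'M[K]_(m, n)) :
  (rowspan L <= B)%MS = all (fun v => v <= B)%MS L.
Proof.
rewrite /rowspan; elim: L => [|v L IH]; first by rewrite big_nil sub0mx.
by rewrite big_cons addsmx_sub genmxE IH.
Qed.

Lemma mem_rowspan v L : v \in L -> (v <= rowspan L)%MS.
Proof. by move=> vL; move: (submx_refl (rowspan L)); rewrite rowspan_sub => /allP->. Qed.

Lemma rank_rowspan L : (\rank (rowspan L) <= size L)%N.
Proof.
rewrite /rowspan; elim: L => [|v L IH]; first by rewrite big_nil mxrank0.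
rewrite big_cons; apply: leq_trans (mxrank_adds_leqif _ _).1 _.
by rewrite genmxE (leq_add (rank_leq_row v) IH).
Qed.

Definition chain (p : 'rV[K]_n * nat) : seq 'rV[K]_n :=
  [seq p.1 *m X ^+ q | q <- iota 0 p.2].

Definition chains (s : seq ('rV[K]_n * nat)) : seq 'rV[K]_n :=
  flatten (map chain s).

Lemma size_chains s : size (chains s) = sumn (map snd s).
Proof. by elim: s => [|p s IH] //=; rewrite size_cat IH size_map size_iota. Qed.

Lemma chainsP v s :
  reflect (exists2 p, p \in s & exists2 q, (q < p.2)%N & v = p.1 *m X ^+ q)
          (v \in chains s).
Proof.
apply: (iffP flattenP) => [[_ /mapP[p ps ->] /mapP[q]]|[p ps [q hq ->]]].
  by rewrite mem_iota => /andP[_ hq] ->; exists p => //; exists q.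
by exists (chain p); apply: map_f; rewrite // mem_iota.
Qed.

Lemma stablemx_exp m (W : 'M[K]_(m, n)) q :
  stablemx W X -> stablemx W (X ^+ q).
Proof.
move=> sW; elim: q => [|q IH]; first by rewrite expr0 mulmx1.
by rewrite exprS; apply: stablemxM.
Qed.

Lemma chains_sub (W : 'M[K]_n) s : stablemx W X ->
  all (fun p => p.1 <= W)%MS s -> (rowspan (chains s) <= W)%MS.
Proof.
move=> sW /allP hs; rewrite rowspan_sub; apply/allP => _ /chainsP[p ps [q _ ->]].
by rewrite (submx_trans (submxMr _ (hs p ps))) ?stablemx_exp.
Qed.

Definition jordan_chains (W : 'M[K]_n) (s : seq ('rV[K]_n * nat)) : bool :=
  [&& all (fun p => 0 < p.2)%N s, sorted geq (map snd s),
      all (fun p => p.1 *m X ^+ p.2 == 0) s,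
      (rowspan (chains s) == W)%MS & size (chains s) == \rank W].

Lemma jordan_chains0 (W : 'M[K]_n) : \rank W = 0%N -> jordan_chains W [::].
Proof.
move/eqP; rewrite mxrank_eq0 => /eqP ->.
by rewrite /jordan_chains /= /rowspan big_nil mxrank0 sub0mx.
Qed.

Section Step.
Variables (W : 'M[K]_n) (s' : seq ('rV[K]_n * nat)).
Hypotheses (stW : stablemx W X) (chs' : jordan_chains (W *m X) s').

Let s'_pos p : p \in s' -> (0 < p.2)%N.
Proof. by case/and5P: chs' => /allP + _ _ _ _; apply. Qed.

Let s'_end p : p \in s' -> p.1 *m X ^+ p.2 = 0.
Proof. by case/and5P: chs' => _ _ /allP + _ _ => /[apply] /eqP. Qed.

Let s'_span : (rowspan (chains s') == W *m X)%MS.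
Proof. by case/and5P: chs'. Qed.

Let s'_size : size (chains s') = \rank (W *m X).
Proof. by case/and5P: chs' => _ _ _ _ /eqP. Qed.

Let s'_head p : p \in s' -> (p.1 <= W *m X)%MS.
Proof.
move=> ps; have [+ _] := andP s'_span; apply: submx_trans.
by apply: mem_rowspan; apply/chainsP; exists p => //; exists 0%N; rewrite ?s'_pos ?mulmx1.
Qed.

Definition lift (w : 'rV[K]_n) : 'rV[K]_n := w *m pinvmx (W *m X) *m W.

Lemma lift_sub w : (lift w <= W)%MS. Proof. exact: submxMl. Qed.

Lemma liftK w : (w <= W *m X)%MS -> lift w *m X = w.
Proof. by move=> hw; rewrite /lift -mulmxA mulmxKpV. Qed.

Definition bottoms : seq 'rV[K]_n := [seq p.1 *m X ^+ p.2.-1 | p <- s'].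

Lemma bottoms_sub_ker : (rowspan bottoms <= W :&: kermx X)%MS.
Proof.
rewrite rowspan_sub; apply/allP => _ /mapP[p ps ->]; rewrite sub_capmx sub_kermx.
rewrite (submx_trans (submxMr _ (submx_trans (s'_head ps) stW))) ?stablemx_exp //=.
by rewrite -mulmxA mulmxE -exprSr prednK ?s'_end ?s'_pos.
Qed.

Lemma rank_bottoms : \rank (rowspan bottoms) = size s'.
Proof.
apply/eqP; rewrite eqn_leq; apply/andP; split.
  by have := rank_rowspan bottoms; rewrite size_map.
pose tops := chains [seq (p.1, p.2.-1) | p <- s'].
have size_tops : (size tops + size s')%N = \rank (W *m X).
  rewrite -s'_size !size_chains -(size_map snd s') -(sumn_pred (s := map snd s')).
    by congr (sumn _ + _)%N; elim: (s') => //= p s ->.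
  by apply/allP => _ /mapP[p /s'_pos ? ->].
have : (rowspan (chains s') <= rowspan tops + rowspan bottoms)%MS.
  rewrite rowspan_sub; apply/allP => _ /chainsP[p ps [q hq ->]].
  have [lt|ge] := ltnP q p.2.-1.
    apply: submx_trans (addsmxSl _ _) ; apply: mem_rowspan; apply/chainsP.
    by exists (p.1, p.2.-1); rewrite ?map_f //; exists q.
  apply: submx_trans (addsmxSr _ _); apply: mem_rowspan.
  have -> : q = p.2.-1 by lia.
  exact: map_f.
move/mxrankS; rewrite (eqmxP s'_span) -size_tops => /leq_trans/(_ (mxrank_adds_leqif _ _).1).
by move/leq_trans/(_ (leq_add (rank_rowspan tops) (leqnn _))); rewrite leq_add2l.
Qed.

Definition kernel_complement : 'M[K]_n := (W :&: kermx X :\: rowspan bottoms)%MS.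
Local Notation Z := kernel_complement.

Definition new_heads : seq 'rV[K]_n := [seq row i (row_base Z) | i <- enum 'I_(\rank Z)].

Lemma new_heads_sub z : z \in new_heads -> (z <= W :&: kermx X)%MS.
Proof.
by case/mapP => i _ ->; rewrite (submx_trans (row_sub i _)) // eq_row_base diffmxSl.
Qed.

Definition step_chains : seq ('rV[K]_n * nat) :=
  [seq (lift p.1, p.2.+1) | p <- s'] ++ [seq (z, 1%N) | z <- new_heads].

Lemma lengths_step_chains :
  map snd step_chains = map succn (map snd s') ++ nseq (\rank Z) 1%N.
Proof.
rewrite map_cat -!map_comp; congr (_ ++ _).
have map_cst (l : seq 'I_(\rank Z)) : [seq 1%N | _ <- l] = nseq (size l) 1%N.
  by elim: l => //= i l ->.
by rewrite map_cst -enumT size_enum_ord.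
Qed.

Lemma lift_sub_step_span p q : p \in s' -> (q <= p.2)%N ->
  (lift p.1 *m X ^+ q <= rowspan (chains step_chains))%MS.
Proof.
move=> ps hq; apply: mem_rowspan; apply/chainsP.
by exists (lift p.1, p.2.+1); rewrite ?mem_cat ?map_f //; exists q.
Qed.

Lemma ker_sub_step_span : (W :&: kermx X <= rowspan (chains step_chains))%MS.
Proof.
have KZB : (W :&: kermx X <= Z + rowspan bottoms)%MS.
  rewrite -{1}(addsmx_diff_cap_eq (W :&: kermx X)%MS (rowspan bottoms)).
  by rewrite addsmxS // capmxSr.
apply: submx_trans KZB _; rewrite addsmx_sub; apply/andP; split.
  rewrite -eq_row_base; apply/row_subP => i; apply: mem_rowspan; apply/chainsP.
  exists (row i (row_base Z), 1%N); last by exists 0%N; rewrite ?mulmx1.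
  by rewrite mem_cat; apply/orP; right; apply: map_f; apply: map_f; rewrite mem_enum.
rewrite rowspan_sub; apply/allP => _ /mapP[p ps ->].
have <- : lift p.1 *m X ^+ p.2 = p.1 *m X ^+ p.2.-1.
  by rewrite -(prednK (s'_pos ps)) exprS mulmxA liftK ?s'_head.
exact: lift_sub_step_span.
Qed.

Lemma sub_step_span : (W <= rowspan (chains step_chains))%MS.
Proof.
pose Su := rowspan (chains [seq (lift p.1, p.2) | p <- s']).
have SuS : (Su <= rowspan (chains step_chains))%MS.
  rewrite rowspan_sub; apply/allP => _ /chainsP[_ /mapP[p ps ->] [q hq ->]].
  exact/lift_sub_step_span/ltnW.
have WXSu : (W *m X <= Su *m X)%MS.
  have [_ +] := andP s'_span; move/submx_trans; apply.
  rewrite rowspan_sub; apply/allP => _ /chainsP[p ps [q hq ->]].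
  have -> : p.1 *m X ^+ q = lift p.1 *m X ^+ q *m X.
    by rewrite -mulmxA mulmxE -exprSr exprS mulmxA liftK ?s'_head.
  apply: submxMr; apply: mem_rowspan; apply/chainsP.
  by exists (lift p.1, p.2); rewrite ?map_f //; exists q.
case/submxP: WXSu => D hD.
have ker : (W - D *m Su <= W :&: kermx X)%MS.
  rewrite sub_capmx sub_kermx mulmxBl -mulmxA -hD subrr eqxx andbT.
  by rewrite addmx_sub ?eqmx_opp // (submx_trans (submxMl D Su)) // chains_sub //;
    rewrite all_map; apply/allP => p _; apply: lift_sub.
rewrite -(subrK (D *m Su) W) addmx_sub //; first exact: submx_trans ker ker_sub_step_span.
exact: submx_trans (submxMl D Su) SuS.
Qed.

Lemma size_step_chains : size (chains step_chains) = \rank W.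
Proof.
rewrite size_chains lengths_step_chains sumn_cat sumn_succ sumn_nseq mul1n.
rewrite -size_chains s'_size size_map -rank_bottoms -(mxrank_mul_ker W X) -addnA.
rewrite -(mxrank_cap_compl (W :&: kermx X)%MS (rowspan bottoms)).
by rewrite (capmx_idPr bottoms_sub_ker).
Qed.

Lemma jordan_chains_step : jordan_chains W step_chains.
Proof.
have heads_sub p : p \in step_chains -> (p.1 <= W)%MS.
  rewrite mem_cat => /orP[]/mapP[q qs ->]; first exact: lift_sub.
  by rewrite (submx_trans (new_heads_sub qs)) ?capmxSl.
apply/and5P; split.
- by rewrite all_cat !all_map; apply/andP; split; apply/allP.
- by rewrite lengths_step_chains sorted_geq_succ_ones //; case/and5P: chs'.
- apply/allP => p; rewrite mem_cat => /orP[]/mapP[q qs ->] /=.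
    by rewrite exprS mulmxA liftK ?s'_head ?s'_end.
  by have := new_heads_sub qs; rewrite sub_capmx sub_kermx expr1 => /andP[_].
- by rewrite /eqmx sub_step_span chains_sub //; apply/allP.
- by rewrite size_step_chains.
Qed.

End Step.

Lemma chains_mulX s :
  all (fun p => 0 < p.2)%N s -> all (fun p => p.1 *m X ^+ p.2 == 0) s ->
  forall i, (i < size (chains s))%N ->
  nth 0 (chains s) i *m X =
    if i.+1 \in block_ends (map snd s) then 0 else nth 0 (chains s) i.+1.
Proof.
elim: s => [|p s IH] // /andP[p0 pos] /andP[/eqP pend ends] i.
have chains_cons : chains (p :: s) = chain p ++ chains s by [].
rewrite map_cons block_ends_cons inE chains_cons size_cat !nth_cat !size_map size_iota.
have ends_gt0 := block_ends_gt0 (la := map snd s); rewrite all_map in ends_gt0.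
have [ilt _|ige hi] := ltnP i p.2.
  have -> : (i.+1 \in map (addn p.2) (block_ends (map snd s))) = false.
    by apply/mapP => -[y /(ends_gt0 pos) y0 /eqP]; lia.
  rewrite orbF (nth_map 0%N) ?size_iota // nth_iota // add0n.
  have [e|ne] := eqVneq i.+1 p.2; first by rewrite -mulmxA mulmxE -exprSr e pend.
  have ilt' : (i.+1 < p.2)%N by lia.
  by rewrite ilt' (nth_map 0%N) ?size_iota // nth_iota // add0n exprSr mulmxA.
have -> : (i.+1 == p.2) = false by apply/eqP; lia.
have -> : (i.+1 < p.2)%N = false by apply/negbTE; lia.
have -> : (i.+1 - p.2 = (i - p.2).+1)%N by lia.
have {1}-> : i.+1 = (p.2 + (i - p.2).+1)%N by lia.
by rewrite orFb (mem_map (@addnI p.2)); apply: IH; rewrite ?ltn_subLR.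
Qed.

Hypothesis nilX : nilpotent_mx X.

Lemma mxrankM_nilpotent_lt (W : 'M[K]_n) : stablemx W X -> \rank W != 0%N ->
  (\rank (W *m X) < \rank W)%N.
Proof.
move=> sW; apply: contraR; rewrite -leqNgt => rWX.
have /andP[_ sWWX] : (W *m X == W)%MS.
  by rewrite -(mxrank_leqif_eq sW) eqn_leq rWX mxrankM_maxl.
have sWWXj j : (W <= W *m X ^+ j)%MS.
  elim: j => [|j IH]; first by rewrite mulmx1.
  by rewrite exprSr mulmxA (submx_trans sWWX) ?submxMr.
by case: nilX => r Xr; move: (sWWXj r); rewrite Xr mulmx0 submx0 -mxrank_eq0.
Qed.

Lemma jordan_chains_exist (W : 'M[K]_n) : stablemx W X -> exists s, jordan_chains W s.
Proof.
move: {2}(\rank W) (leqnn (\rank W)) => N; elim: N W => [|N IH] W rW sW.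
  by exists [::]; apply: jordan_chains0; apply/eqP; rewrite -leqn0.
have [r0|r0] := eqVneq (\rank W) 0%N; first by exists [::]; apply: jordan_chains0.
have [s' chs'] : exists s', jordan_chains (W *m X) s'.
  apply: IH; last exact: submxMr.
  by rewrite -ltnS (leq_trans (mxrankM_nilpotent_lt sW r0)).
by exists (step_chains W s'); apply: jordan_chains_step.
Qed.

Lemma nilpotent_similar_jordan_nil : exists2 la, is_partition n la &
  exists2 h : 'M[K]_n, h \in unitmx & h *m X = jordan_nil K n la *m h.
Proof.
have [s] := jordan_chains_exist (stablemx_unit X (unitmx1 K n)).
case/and5P=> pos sorted_s ends /eqmxP span_s; rewrite mxrank1 => /eqP size_s.
exists (map snd s); first by split; rewrite ?all_map -?size_chains.
pose L := chains s; pose h := \matrix_(i < n) nth 0 L i.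
have hL : (h :=: rowspan L)%MS.
  apply/eqmxP/andP; split.
    by apply/row_subP => i; rewrite rowK mem_rowspan ?mem_nth ?size_s.
  rewrite rowspan_sub; apply/allP => v vL.
  have iv : (index v L < n)%N by have := index_mem v L; rewrite vL size_s.
  by rewrite -(nth_index 0 vL) -(rowK (fun i : 'I_n => nth 0 L i) (Ordinal iv)) row_sub.
exists h; first by rewrite -row_free_unit /row_free hL span_s mxrank1.
apply/row_matrixP => i; rewrite !row_mul rowK chains_mulX ?size_s // mulmx_sum_row.
case ends_i : (i.+1 \in block_ends (map snd s)).
  by rewrite big1 // => j _; rewrite !mxE ends_i andbF scale0r.
have [lt_in|ge_in] := ltnP i.+1 n.
  rewrite (bigD1 (Ordinal lt_in)) //= big1 ?addr0 ?mxE ?eqxx ?ends_i ?scale1r ?rowK //.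
  move=> j /negbTE nj; rewrite !mxE.
  have -> : ((j : nat) == i.+1) = false.
    by apply: contraFF nj => /eqP ji; apply/eqP/val_inj.
  by rewrite scale0r.
rewrite nth_default ?size_s // big1 // => j _; rewrite !mxE.
rewrite (_ : (j : nat) == i.+1 = false) ?scale0r //.
by apply/negbTE; rewrite neq_ltn (leq_trans (ltn_ord j)).
Qed.

End JordanChains.

Lemma mpoly_ind_ops (R : comNzRingType) N (S : {mpoly R[N]} -> Prop) :
  (forall c, S c%:MP) -> (forall i, S 'X_i) ->
  (forall p q, S p -> S q -> S (p + q)) -> (forall p q, S p -> S q -> S (p * q)) ->
  forall p, S p.
Proof.
move=> hC hX hD hM; elim/mpolyind => [|c m p _ _ hp]; first by rewrite -mpolyC0.
apply: (hD) => //; rewrite -mul_mpolyC; apply: (hM) => //.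
rewrite mpolyXE_id; apply: (big_ind S); [by rewrite -mpolyC1 | exact: hM |].
by move=> i _; elim: (m i) => [|j IH]; rewrite ?expr0 -?mpolyC1 // exprS; apply: (hM).
Qed.

Section LinePoly.
Variables (k : fieldType) (N : nat) (a b : 'I_N -> k).

Definition line_poly (p : {mpoly k[N]}) : {poly k} :=
  mmap (@polyC k) (fun i => (a i)%:P + (b i)%:P * 'X) p.

Lemma line_polyC c : line_poly c%:MP = c%:P. Proof. exact: mmapC. Qed.

Lemma line_polyX i : line_poly 'X_i = (a i)%:P + (b i)%:P * 'X.
Proof. by rewrite /line_poly [LHS]mmapX mmap1U. Qed.

Lemma line_polyD p q : line_poly (p + q) = line_poly p + line_poly q.
Proof. exact: mmapD. Qed.

Lemma line_polyM p q : line_poly (p * q) = line_poly p * line_poly q.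
Proof.
exact: (mmap_is_multiplicative (fun i => (a i)%:P + (b i)%:P * 'X)
          (polyC : {rmorphism k -> {poly k}})).1.
Qed.

Lemma horner_line_poly p t : (line_poly p).[t] = p.@[fun i => a i + b i * t].
Proof.
elim/mpoly_ind_ops: p => [c|i|p q hp hq|p q hp hq].
- by rewrite line_polyC hornerC mevalC.
- by rewrite line_polyX mevalXU hornerD hornerC hornerCM hornerX.
- by rewrite line_polyD hornerD hp hq mevalD.
- by rewrite line_polyM hornerM hp hq mevalM.
Qed.

Lemma coef_line_poly p : (line_poly p)`_0 = p.@[a] /\
  (line_poly p)`_1 = \sum_(i < N) (p^`M(i)).@[a] * b i.
Proof.
elim/mpoly_ind_ops: p => [c|i|p q [p0 p1] [q0 q1]|p q [p0 p1] [q0 q1]].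
- rewrite line_polyC !coefC mevalC; split => //.
  by rewrite big1 // => i _; rewrite mderivC meval0 mul0r.
- rewrite line_polyX mevalXU !coefD !coefC !coefCM !coefX /= mulr0 addr0 add0r mulr1.
  split => //; rewrite (bigD1 i) //= big1 ?addr0 => [|j /negbTE ji].
    rewrite mderivX mnm1E eqxx scale1r.
    have -> : (U_(i) - U_(i))%MM = 0%MM by apply/mnmP => j; rewrite mnmBE subnn mnm0E.
    by rewrite mpolyX0 meval1 mul1r.
  by rewrite mderivX mnm1E eq_sym ji scale0r meval0 mul0r.
- rewrite line_polyD !coefD p0 p1 q0 q1 mevalD; split => //.
  by rewrite -big_split; apply: eq_bigr => i _; rewrite mderivD mevalD mulrDl.
- rewrite line_polyM coef0M p0 q0 mevalM coefM big_ord_recr big_ord1 /= p0 p1 q0 q1.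
  split => //; rewrite mulr_sumr mulr_suml -big_split; apply: eq_bigr => i _.
  by rewrite mderivM mevalD !mevalM /=; ring.
Qed.

End LinePoly.

Lemma poly_eq0_off_roots (F : closedFieldType) (d q : {poly F}) :
  d != 0 -> (forall t, d.[t] != 0 -> q.[t] = 0) -> q = 0.
Proof.
move=> d0 hq; have /eqP : d * q = 0.
  apply/eqP/negPn/negP => /closed_nonrootP[t]; rewrite rootE hornerM.
  by have [->|/hq ->] := eqVneq d.[t] 0; rewrite ?mul0r ?mulr0 eqxx.
by rewrite mulf_eq0 (negbTE d0) => /eqP.
Qed.

Lemma coef_mulmx_polyC (R : nzRingType) m n p (A : 'M[{poly R}]_(m, n))
    (B : 'M[R]_(n, p)) i :
  map_mx (coefp i) (A *m map_mx polyC B) = map_mx (coefp i) A *m B.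
Proof.
apply/matrixP => a c; rewrite !mxE /= coef_sum.
by apply: eq_bigr => j _; rewrite !mxE coefMC.
Qed.

Lemma coef_polyC_mulmx (R : nzRingType) m n p (B : 'M[R]_(m, n))
    (A : 'M[{poly R}]_(n, p)) i :
  map_mx (coefp i) (map_mx polyC B *m A) = B *m map_mx (coefp i) A.
Proof.
apply/matrixP => a c; rewrite !mxE /= coef_sum.
by apply: eq_bigr => j _; rewrite !mxE coefCM.
Qed.

Lemma mxtrace_conj (R : comUnitRingType) n (g X : 'M[R]_n) :
  g \in unitmx -> \tr (g *m X *m invmx g) = \tr X.
Proof. by move=> gu; rewrite mxtrace_mulC mulmxA mulVmx ?mul1mx. Qed.

Section RationalRepresentation.
Variables (k : closedFieldType) (n m e : nat) (P : 'M[{mpoly k[n * n]}]_m).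
Hypothesis HP : is_rational_repr e P.

Local Notation rho := (repr_mx e P).
Local Notation drho := (drepr_mx e P).

Lemma repr_mx1 : rho 1%:M = 1%:M. Proof. by case: HP. Qed.

Lemma repr_mxM g h : g \in unitmx -> h \in unitmx -> rho (g *m h) = rho g *m rho h.
Proof. by case: HP => _; apply. Qed.

Definition repr_poly (A : 'M[k]_n) : 'M[k]_m := map_mx (fun p => p.@[mxcoord A]) P.

Lemma repr_poly1 : repr_poly 1%:M = 1%:M.
Proof. by have := repr_mx1; rewrite /repr_mx det1 expr1n invr1 scale1r. Qed.

Lemma repr_poly_conj g h : g \in unitmx -> h \in unitmx ->
  repr_poly (g *m h *m invmx g) *m rho g = rho g *m repr_poly h.
Proof.
move=> gu hu; have dh : (\det h)^-e != 0.
  by rewrite invr_eq0 expf_neq0 // -unitfE -unitmxE.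
have ghu : g *m h *m invmx g \in unitmx by rewrite !unitmx_mul gu hu unitmx_inv gu.
have dg : \det g != 0 by rewrite -unitfE -unitmxE.
have rho_ghg : rho (g *m h *m invmx g) = (\det h)^-e *: repr_poly (g *m h *m invmx g).
  by rewrite /repr_mx !det_mulmx det_inv mulrAC divff // mul1r.
have rho_h : rho h = (\det h)^-e *: repr_poly h by [].
have := repr_mxM ghu gu; rewrite mulmxKV // repr_mxM // rho_ghg rho_h.
move: (rho g) => R; by rewrite -scalemxAl -scalemxAr => /(scalerI dh) ->.
Qed.

Definition repr_line (Z : 'M[k]_n) : 'M[{poly k}]_m :=
  map_mx (line_poly (mxcoord 1%:M) (mxcoord Z)) P.

Lemma horner_repr_line Z t :
  map_mx (horner_eval t) (repr_line Z) = repr_poly (1%:M + t *: Z).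
Proof.
apply/matrixP => a b; rewrite !mxE horner_evalE horner_line_poly.
by apply: meval_eq => i; rewrite /mxcoord linearD linearZ /= !mxE mulrC.
Qed.

Lemma coef1_repr_line Z :
  map_mx (coefp 1) (repr_line Z) = drho Z + (e%:R * \tr Z) *: 1%:M.
Proof.
apply/matrixP => a b; rewrite !mxE /= (coef_line_poly _ _ (P a b)).2.
have := congr1 (fun M : 'M[k]_m => M a b) repr_poly1; rewrite !mxE => ->.
by rewrite /mxcoord; case: (a == b); rewrite /= ?mulr1 ?mulr0; ring.
Qed.

Lemma repr_line_conj g X : g \in unitmx ->
  repr_line (g *m X *m invmx g) *m map_mx polyC (rho g) =
  map_mx polyC (rho g) *m repr_line X.
Proof.
move=> gu; set Y := g *m X *m invmx g.
pose Q : 'M[{poly k}]_n := 1%:M + 'X *: map_mx polyC X.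
have horner_Q t : map_mx (horner_eval t) Q = 1%:M + t *: X.
  apply/matrixP => i j; rewrite !mxE horner_evalE hornerD hornerM hornerX hornerC.
  by case: (i == j); rewrite /= ?hornerC ?horner0 mulrC.
have horner_detQ t : (\det Q).[t] = \det (1%:M + t *: X).
  by rewrite -horner_evalE -det_map_mx horner_Q.
have horner_rho t : map_mx (horner_eval t) (map_mx polyC (rho g)) = rho g.
  by apply/matrixP => i j; rewrite !mxE horner_evalE hornerC.
apply/eqP; rewrite -subr_eq0; apply/eqP/matrixP => a b; rewrite [RHS]mxE.
(* The difference vanishes wherever 1 + tX is invertible, i.e. off the roots of det(1 + tX). *)
apply: (poly_eq0_off_roots (d := \det Q)) => [|t].
  apply: contra_neq (oner_neq0 k) => Q0.
  by have := horner_detQ 0; rewrite Q0 horner0 scale0r addr0 det1 => ->.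
rewrite horner_detQ -unitfE -unitmxE => hu; rewrite -horner_evalE.
have conj_line : g *m (1%:M + t *: X) *m invmx g = 1%:M + t *: Y.
  by rewrite mulmxDr mulmx1 mulmxDl mulmxV // -scalemxAr -scalemxAl.
have := repr_poly_conj gu hu; rewrite conj_line -!horner_repr_line => eq_t.
set D := (repr_line Y *m _ - _).
have -> : horner_eval t (D a b) = map_mx (horner_eval t) D a b by rewrite [RHS]mxE.
by rewrite map_mxB !map_mxM horner_rho eq_t subrr mxE.
Qed.

Lemma drepr_conj g X : g \in unitmx ->
  drho (g *m X *m invmx g) *m rho g = rho g *m drho X.
Proof.
move=> gu; have := congr1 (map_mx (coefp 1)) (repr_line_conj X gu).
rewrite coef_mulmx_polyC coef_polyC_mulmx !coef1_repr_line mxtrace_conj //.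
move: (rho g) => R; rewrite mulmxDl mulmxDr -scalemxAl -scalemxAr mul1mx mulmx1.
by move/addIr.
Qed.

End RationalRepresentation.

Lemma exists_seq_witnesses (T U : eqType) (Q : T -> U -> Prop) (s : seq T) :
  exists s' : seq U,
    forall x, x \in s -> (exists u, Q x u) -> exists2 u, u \in s' & Q x u.
Proof.
elim: s => [|x s [s' IH]]; first by exists [::].
have [[u Qxu]|noQx] := classic (exists u, Q x u).
  exists (u :: s') => y; rewrite inE => /orP[/eqP-> _|/IH h /h[v vs' Qyv]].
    by exists u; rewrite ?mem_head.
  by exists v; rewrite // inE vs' orbT.
by exists s' => y; rewrite inE => /orP[/eqP->|/IH].
Qed.

Fixpoint bounded_seqs (s b : nat) : seq (seq nat) :=
  if s is s'.+1 then [::] :: [seq x :: t | x <- iota 1 b, t <- bounded_seqs s' b]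
  else [:: [::]].

Lemma mem_bounded_seqs s b la : (size la <= s)%N ->
  all (fun x => 0 < x <= b)%N la -> la \in bounded_seqs s b.
Proof.
elim: s la => [|s IH] [|x la] //= sz /andP[hx hla].
by rewrite inE allpairs_f ?orbT ?IH // mem_iota add1n ltnS.
Qed.

Lemma partition_bounded_seqs n la : is_partition n la -> la \in bounded_seqs n n.
Proof.
case=> pos _ <-; have le_sumn x : x \in la -> (x <= sumn la)%N.
  by elim: la {pos} => //= y la IH; rewrite inE => /orP[/eqP->|/IH]; lia.
apply: mem_bounded_seqs; last by apply/allP => x xla; rewrite (allP pos) ?le_sumn.
by elim: la pos {le_sumn} => //= x la IH /andP[x0 /IH]; lia.
Qed.

Lemma jordan_nil_nilpotent (K : fieldType) n la : nilpotent_mx (jordan_nil K n la).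
Proof.
exists n; set J := jordan_nil K n la.
have J_r_eq0 r (i j : 'I_n) : (j < i + r)%N -> (J ^+ r) i j = 0.
  elim: r i j => [|r IH] i j ji.
    by rewrite expr0 mxE; case: eqP => [e|//]; move: ji; rewrite e addn0 ltnn.
  rewrite exprSr mxE big1 // => l _; rewrite [J l j]mxE.
  by case: eqP => [jl|_]; rewrite ?andFb ?mulr0 // IH ?mul0r //; lia.
by apply/matrixP => i j; rewrite J_r_eq0 ?mxE // (leq_trans (ltn_ord j)) ?leq_addl.
Qed.

Section SemidirectOrbits.
Variables (k : closedFieldType) (n m e : nat) (P : 'M[{mpoly k[n * n]}]_m).
Hypothesis HP : is_rational_repr e P.

Local Notation rho := (repr_mx e P).
Local Notation drho := (drepr_mx e P).
Local Notation Ad := (Ad_semi e P).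
Local Notation orbit := (in_semi_orbit e P).

Lemma Ad_semi1 Xw : Ad 1%:M 0 Xw = Xw.
Proof.
case: Xw => X w; rewrite /Ad_semi /= mul1mx invmx1 mulmx1 mulmx0 oppr0 add0r.
by rewrite (repr_mx1 HP) mul1mx.
Qed.

Lemma Ad_semiM g1 g2 v1 v2 Xw : g1 \in unitmx -> g2 \in unitmx ->
  Ad g1 v1 (Ad g2 v2 Xw) = Ad (g1 *m g2) (rho g1 *m v2 + v1) Xw.
Proof.
move=> g1u g2u; case: Xw => X w; rewrite /Ad_semi /=.
set X' := g2 *m X *m invmx g2.
have g12u : g1 *m g2 \in unitmx by rewrite unitmx_mul g1u g2u.
have -> : g1 *m g2 *m X *m invmx (g1 *m g2) = g1 *m X' *m invmx g1.
  rewrite -[g1 *m X' *m invmx g1](mulmxK g12u); congr (_ *m _).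
  by rewrite !mulmxA !mulmxKV.
congr pair; rewrite !mulmxDr !mulmxN [rho g1 *m (_ *m v2)]mulmxA [rho g1 *m (_ *m w)]mulmxA.
rewrite -(drepr_conj HP _ g1u) -repr_mxM // [_ *m (rho g1 *m v2)]mulmxA.
by rewrite opprD addrA [- _ + - _]addrC.
Qed.

Lemma semi_orbit_sym Xw Yw : orbit Xw Yw -> orbit Yw Xw.
Proof.
case=> g [v [gu <-]]; exists (invmx g), (- (rho (invmx g) *m v)).
by rewrite unitmx_inv Ad_semiM ?unitmx_inv // mulVmx // addrN Ad_semi1.
Qed.

Lemma semi_orbit_trans Xw Yw Zw : orbit Xw Yw -> orbit Yw Zw -> orbit Xw Zw.
Proof.
case=> g2 [v2 [g2u <-]] [g1 [v1 [g1u <-]]].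
by exists (g1 *m g2), (rho g1 *m v2 + v1); rewrite unitmx_mul g1u g2u Ad_semiM.
Qed.

Lemma semi_orbit_conj g X w : g \in unitmx ->
  orbit (X, w) (g *m X *m invmx g, rho g *m w).
Proof. by exists g, 0; rewrite /Ad_semi /= mulmx0 oppr0 add0r. Qed.

Lemma semi_orbitE X w w' : orbit (X, w) (X, w') <->
  exists g, in_centralizer X g /\ in_image_drepr e P X (rho g *m w - w').
Proof.
split=> [[g [v [gu]]]|[g [[gu gX] [y hy]]]].
  rewrite /Ad_semi /= => -[gXg <-]; exists g; split.
    by split=> //; rewrite -{2}gXg mulmxKV.
  by exists v; rewrite gXg opprD opprK addrC addrNK.
have gXg : g *m X *m invmx g = X by rewrite gX mulmxK.
by exists g, y; rewrite /Ad_semi /= gXg -hy opprB subrK.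
Qed.

Lemma semi_orbit_translate X w u : in_image_drepr e P X u -> orbit (X, w) (X, w + u).
Proof.
case=> y ->; apply/semi_orbitE; exists 1%:M.
split; first by split; rewrite ?unitmx1 ?mul1mx ?mulmx1.
by exists (- y); rewrite (repr_mx1 HP) mul1mx opprD addrA subrr add0r mulmxN.
Qed.

Lemma quot_finite_orbitsE J : quot_finite_orbits e P J <->
  exists reps : seq 'cV[k]_m, forall w, exists2 w0, w0 \in reps & orbit (J, w) (J, w0).
Proof.
by split=> -[reps h]; exists reps => w; have [w0 ? /semi_orbitE] := h w; exists w0.
Qed.

Lemma quot_finite_orbits_of_semi J :
  semi_nilcone_finite_orbits e P -> nilpotent_mx J -> quot_finite_orbits e P J.
Proof.
case=> reps [_ hreps] nilJ; apply/quot_finite_orbitsE.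
have [ws hws] := exists_seq_witnesses (fun x w => orbit x (J, w)) reps.
exists ws => w; have [x xr xw] := hreps J w nilJ.
have [w0 w0ws xw0] := hws x xr (ex_intro _ w xw).
by exists w0 => //; apply: semi_orbit_trans (semi_orbit_sym xw) xw0.
Qed.

Lemma semi_nilcone_finite_orbits_of_quot :
  (forall la, is_partition n la -> quot_finite_orbits e P (jordan_nil k n la)) ->
  semi_nilcone_finite_orbits e P.
Proof.
move=> fin; pose J la := jordan_nil k n la.
have [repss hrepss] := exists_seq_witnesses (fun la (reps : seq 'cV[k]_m) =>
  is_partition n la /\ forall w, exists2 w0, w0 \in reps & orbit (J la, w) (J la, w0))
  (bounded_seqs n n).
exists [seq (J la, w0) | la <- bounded_seqs n n, w0 <- flatten repss]; split.
  by move=> _ /allpairsP[[la w0] [_ _ ->]]; apply: jordan_nil_nilpotent.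
move=> X w nilX; have [la la_part [h hu hX]] := nilpotent_similar_jordan_nil nilX.
have [reps reps_in [_ hreps]] : exists2 reps, reps \in repss &
    is_partition n la /\ forall w, exists2 w0, w0 \in reps & orbit (J la, w) (J la, w0).
  apply: hrepss; first exact: partition_bounded_seqs.
  by have /quot_finite_orbitsE[reps ?] := fin la la_part; exists reps.
have [w0 w0reps hw0] := hreps (rho h *m w).
exists (J la, w0); first by apply/allpairsP; exists (la, w0); split=> //=;
  rewrite ?partition_bounded_seqs //; apply/flattenP; exists reps.
apply/semi_orbit_sym/(semi_orbit_trans _ hw0).
by rewrite -[J la](mulmxK hu) -hX; apply: semi_orbit_conj.
Qed.

End SemidirectOrbits.

Unset Implicit Arguments.

Theorem lemma1p2 (k : closedFieldType) (n m e : nat)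
    (P : 'M[{mpoly k[n * n]}]_m) (HP : is_rational_repr e P) :
  (forall (la : seq nat), is_partition n la ->
     forall (w u : 'cV[k]_m), in_image_drepr e P (jordan_nil k n la) u ->
       in_semi_orbit e P (jordan_nil k n la, w) (jordan_nil k n la, w + u))
  /\
  (semi_nilcone_finite_orbits e P <->
     forall la : seq nat, is_partition n la ->
       quot_finite_orbits e P (jordan_nil k n la)).
Proof.
split=> [la _ w u|]; first exact: semi_orbit_translate.
split=> [fin la _|]; last exact: semi_nilcone_finite_orbits_of_quot.
exact/(quot_finite_orbits_of_semi HP fin)/jordan_nil_nilpotent.
Qed.
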